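(* Let $G$ be a finite simple connected well-dominated graph of order at least $3$. If the Cartesian product $G \,\square\, H$ is well-dominated for some finite simple connected graph $H$ of order at least $2$, then the minimum degree of $G$ satisfies $\delta(G) \ge 2$.
   Context: A graph is well-dominated if every minimal (with respect to inclusion) dominating set is a minimum dominating set. The Cartesian product $G\,\square\, H$ has vertex set $V(G)\times V(H)$, with $(g_1,h_1)$ adjacent to $(g_2,h_2)$ iff either ($g_1=g_2$ and $h_1h_2\in E(H)$) or ($h_1=h_2$ and $g_1g_2\in E(G)$). *)

From mathcomp Require Import all_boot.
Set Implicit Arguments. Unset Strict Implicit. Unset Printing Implicit Defensive.

Definition simple_graph (V : finType) (e : rel V) : Prop :=
  symmetric e /\ irreflexive e.

Definition connected_graph (V : finType) (e : rel V) : Prop :=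
  forall x y : V, connect e x y.

Definition closed_nbhd (V : finType) (e : rel V) (v : V) : {set V} :=
  v |: [set u | e v u].

Definition dominating (V : finType) (e : rel V) (D : {set V}) : bool :=
  [forall v, [exists u in D, u \in closed_nbhd e v]].

Definition minimal_dominating (V : finType) (e : rel V) (D : {set V}) : Prop :=
  dominating e D /\ forall D' : {set V}, D' \proper D -> ~~ dominating e D'.

Definition minimum_dominating (V : finType) (e : rel V) (D : {set V}) : Prop :=
  dominating e D /\ forall D' : {set V}, dominating e D' -> #|D| <= #|D'|.

Definition well_dominated (V : finType) (e : rel V) : Prop :=
  forall D : {set V}, minimal_dominating e D -> minimum_dominating e D.

Definition cart_prod (V W : finType) (e : rel V) (f : rel W) : rel (V * W) :=
  fun p q => ((p.1 == q.1) && f p.2 q.2) || ((p.2 == q.2) && e p.1 q.1).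

Definition degree (V : finType) (e : rel V) (v : V) : nat := #|[set u | e v u]|.

Definition min_degree_ge (V : finType) (e : rel V) (k : nat) : Prop :=
  forall v : V, k <= degree e v.

From mathcomp Require Import all_boot zify.

Set Implicit Arguments. Unset Strict Implicit. Unset Printing Implicit Defensive.

(* Suppose G has a leaf v, with support vertex u.  Since G is well-dominated,
   G has a minimum dominating set u |: S with u, v \notin S, in which S alone
   dominates every vertex except v.  A Bollobas-Cockayne style extremal choice
   of S (most neighbours of u first, then fewest vertices isolated in u |: S)
   makes every vertex of u |: S have an external private neighbour: a vertex
   s without one is isolated in u |: S, and exchanging s for its neighbours
   improves the choice.  Then (u |: S) x V(H) is a minimal dominating set of
   G \square H, as private neighbours persist in each H-layer, yet replacing
   its u-column by all but one vertex of the v-column still dominates, with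
   fewer vertices; so G \square H is not well-dominated. *)

Lemma card_setI_lt (T : finType) (A B N : {set T}) s :
  #|B| = #|A| -> s \in A -> s \notin N -> B :\: N \subset (A :\ s) :\: N ->
  #|A :&: N| < #|B :&: N|.
Proof.
move=> eqBA sA sN /subset_leq_card leBA.
have /subset_leq_card leAN : A :&: N \subset (A :\ s) :&: N.
  apply/subsetP => x /setIP[xA xN]; rewrite !inE xA xN !andbT.
  by apply/eqP => xs; move: sN; rewrite -xs xN.
have := cardsID N A; have := cardsID N B; have := cardsID N (A :\ s).
by have := cardsD1 s A; rewrite sA; lia.
Qed.

Section Domination.
Variables (V : finType) (e : rel V).

Definition dominates (D A : {set V}) : bool :=
  [forall x in A, [exists t in D, t \in closed_nbhd e x]].

Definition independent (I : {set V}) : bool :=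
  [forall x in I, forall y in I, ~~ e x y].

Definition external_private (D : {set V}) (x p : V) : bool :=
  [&& e p x, p \notin D & [forall t in D, e p t ==> (t == x)]].

Lemma in_closed_nbhd x y : (y \in closed_nbhd e x) = (y == x) || e x y.
Proof. by rewrite !inE. Qed.

Lemma dominatesP (D A : {set V}) :
  reflect (forall x, x \in A -> exists2 t, t \in D & t \in closed_nbhd e x)
          (dominates D A).
Proof.
apply: (iffP forall_inP) => [dom x /dom /exists_inP | dom x /dom [t tD tx]].
  by case=> t; exists t.
by apply/exists_inP; exists t.
Qed.

Lemma dominatingP (D : {set V}) :
  reflect (forall x, exists2 t, t \in D & t \in closed_nbhd e x) (dominating e D).
Proof.
apply: (iffP forallP) => dom x; first by have /exists_inP[t] := dom x; exists t.
by have [t tD tx] := dom x; apply/exists_inP; exists t.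
Qed.

Lemma minimal_dominatingE D : minimal_dominating e D <-> minset (dominating e) D.
Proof.
split=> [[domD minD] | /minsetP[domD minD]].
  apply/minsetP; split=> // B domB sBD; apply/eqP; rewrite eqEproper sBD /=.
  by apply/negP => /minD; rewrite domB.
split=> // B /properP[sBD [x xD xB]]; apply/negP => domB.
by move: xB; rewrite (minD B domB sBD) xD.
Qed.

Lemma minimal_dominating_sub D :
  dominating e D -> exists2 D0, minimal_dominating e D0 & D0 \subset D.
Proof. by case/minset_exists=> D0 minD0 sD0; exists D0 => //; apply/minimal_dominatingE. Qed.

Lemma independent_nadj I x y : independent I -> x \in I -> y \in I -> ~~ e x y.
Proof. by move=> /forall_inP indI xI yI; move/forall_inP: (indI x xI); apply. Qed.

Hypotheses (esym : symmetric e) (eirr : irreflexive e).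

Lemma maximal_independent_minimal_dominating I :
  maxset independent I -> minimal_dominating e I.
Proof.
move=> /maxsetP[indI maxI].
have nadj := independent_nadj indI.
split.
  apply/dominatingP => x; have [xI | xI] := boolP (x \in I).
    by exists x; rewrite ?in_closed_nbhd ?eqxx.
  have [t tI ext] : exists2 t, t \in I & e x t.
    apply/exists_inP; apply: contraT => /exists_inPn nbr.
    suff /maxI eqI : independent (x |: I) by move: xI; rewrite -eqI ?subsetUr // setU11.
    apply/forall_inP => a; rewrite in_setU1 => aI; apply/forall_inP => b.
    rewrite in_setU1 => bI; case/orP: aI => [/eqP-> | aI]; case/orP: bI => [/eqP-> | bI].
    - by rewrite eirr.
    - exact: nbr.
    - by rewrite esym; apply: nbr.
    - exact: nadj.
  by exists t; rewrite // in_closed_nbhd ext orbT.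
move=> B /properP[sBI [x xI xB]]; apply/negP => /dominatingP/(_ x)[t tB].
rewrite in_closed_nbhd => /orP[/eqP tx | ext]; first by move: xB; rewrite -tx tB.
by move: (nadj x t xI (subsetP sBI t tB)); rewrite ext.
Qed.

Lemma minimal_dominating_isolated D s :
  minimal_dominating e D -> s \in D ->
  (forall p, ~~ external_private D s p) -> forall x, x \in D -> ~~ e s x.
Proof.
move=> [/dominatingP domD minD] sD noprv.
have /forallPn[x0 /exists_inPn undom] : ~~ dominating e (D :\ s).
  by apply: minD; rewrite properD1.
have others t : t \in D -> t != s -> ~~ ((t == x0) || e x0 t).
  by move=> tD ts; rewrite -in_closed_nbhd undom // in_setD1 ts.
have x0s : x0 = s.
  apply: contraNeq (noprv x0) => x0s; apply/and3P; split.
  - have [t tD] := domD x0; rewrite in_closed_nbhd.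
    have [-> | ts] := eqVneq t s; last by rewrite (negbTE (others t tD ts)).
    by rewrite eq_sym (negbTE x0s).
  - by apply/negP => x0D; move: (others x0 x0D x0s); rewrite eqxx.
  - apply/forall_inP => t tD; apply/implyP => ex0t; apply/eqP; apply: contraTeq ex0t => ts.
    by move: (others t tD ts); rewrite negb_or => /andP[].
move=> x xD; have [-> | xs] := eqVneq x s; first by rewrite eirr.
by move: (others x xD xs); rewrite x0s negb_or => /andP[].
Qed.

End Domination.

Section Connectivity.
Variables (V : finType) (e : rel V).

Lemma degree_le1_nbr v u :
  degree e v <= 1 -> e v u -> forall x, e v x = (x == u).
Proof.
move=> deg evu x; apply/idP/eqP => [evx | -> //]; apply/eqP; apply: contraTT deg => xu.
have : #|[set u; x]| <= degree e v.
  by apply/subset_leq_card/subsetP => y /set2P[]->; rewrite inE.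
by rewrite cards2 eq_sym xu -ltnNge.
Qed.

Hypotheses (esym : symmetric e) (conn : connected_graph e).

Lemma connected_closed_set (A : {set V}) a x :
  (forall y z, e y z -> y \in A -> z \in A) -> a \in A -> x \in A.
Proof.
move=> closedA aA; have clA : closed e (mem A) by apply: intro_closed; first exact: sym_connect_sym.
by rewrite -(closed_connect clA (conn a x)).
Qed.

Lemma connected_no_isolated : 1 < #|V| -> forall x, exists y, e x y.
Proof.
move=> V2 x; apply/existsP; apply: contraTT V2 => /existsPn nbr; rewrite -leqNgt.
rewrite -(cards1 x) -cardsT subset_leq_card //; apply/subsetP => y _.
apply: (connected_closed_set (a := x)) => [z z' ezz' | ]; last exact: set11.
by rewrite inE => /eqP zx; move: ezz'; rewrite zx (negbTE (nbr z')).
Qed.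

Lemma support_other_nbr u v :
  2 < #|V| -> (forall x, e v x = (x == u)) ->
  exists2 w, e u w & w != v.
Proof.
move=> V3 leaf_v; apply/exists_inP; apply: contraTT V3 => /exists_inPn nbr_u.
have : #|[set: V]| <= #|[set u; v]|.
  apply/subset_leq_card/subsetP => x _; apply: (connected_closed_set (a := u)).
    move=> y z eyz /set2P[] yE; rewrite {y}yE !inE in eyz *.
      by move: (nbr_u z eyz); rewrite negbK => ->; rewrite orbT.
    by rewrite -leaf_v eyz.
  exact: set21.
by rewrite cardsT -ltnNge => /leq_trans; apply; rewrite cards2; case: (u != v).
Qed.

End Connectivity.

Section LeafSupport.
Variables (V : finType) (e : rel V).
Hypotheses (esym : symmetric e) (eirr : irreflexive e) (wd : well_dominated e).
Hypothesis no_isolated : forall x, exists y, e x y.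
Variables (u v w : V).
Hypotheses (leaf_v : forall x, e v x = (x == u)) (euw : e u w) (wv : w != v).

Lemma evu : e v u. Proof. by rewrite leaf_v. Qed.

Lemma support_neq_leaf : u != v.
Proof. by apply: contraTneq evu => ->; rewrite eirr. Qed.

(* The last conjunct says that u |: S is a minimum dominating set. *)
Definition candidate (S : {set V}) : bool :=
  [&& u \notin S, v \notin S, dominates e S [set~ v]
    & [forall X : {set V}, dominating e X ==> (#|S| < #|X|)]].

Definition isolated_part (S : {set V}) : {set V} :=
  [set t in S | [forall x in u |: S, ~~ e t x]].

(* Encodes the lexicographic order: more neighbours of u in S first, then
   fewer vertices isolated in u |: S. *)
Definition weight (S : {set V}) : nat :=
  #|S :&: [set x | e u x]| * #|V|.+1 + (#|V| - #|isolated_part S|).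

Lemma candidate_dominating S : candidate S -> dominating e (u |: S).
Proof.
case/and4P=> _ _ /dominatesP domS _; apply/dominatingP => x.
have [-> | xv] := eqVneq x v; first by exists u; rewrite ?setU11 ?in_closed_nbhd ?evu ?orbT.
have [|t tS tx] := domS x; first by rewrite in_setC1.
by exists t; rewrite // in_setU1 tS orbT.
Qed.

Lemma candidate_minimal S : candidate S -> minimal_dominating e (u |: S).
Proof.
move=> candS; split; first exact: candidate_dominating.
case/and4P: candS => uS _ _ /forall_inP minS B ltB.
by apply: contraTN (proper_card ltB) => /minS; rewrite cardsU1 uS; lia.
Qed.

Lemma candidate_exists : exists S, candidate S.
Proof.
have wu : w != u by apply: contraTneq euw => ->; rewrite eirr.
have evw : ~~ e v w by rewrite leaf_v.
have indvw : independent e [set v; w].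
  apply/forall_inP => x /set2P[]->; apply/forall_inP => y /set2P[]->;
    by rewrite ?eirr ?(negbTE evw) // esym (negbTE evw).
have [I maxI svwI] := maxset_exists indvw.
have minI := maximal_independent_minimal_dominating esym eirr maxI.
have [/dominatingP domI _] := minI.
have vI : v \in I by apply: subsetP svwI _ (set21 v w).
have wI : w \in I by apply: subsetP svwI _ (set22 v w).
have uI : u \notin I.
  by apply: contraTN evu => uI; apply: independent_nadj (maxsetp maxI) vI uI.
exists (I :\ v); apply/and4P; split.
- by rewrite in_setD1 negb_and uI orbT.
- by rewrite setD11.
- apply/dominatesP => x; rewrite in_setC1 => xv.
  have [-> | xu] := eqVneq x u.
    by exists w; rewrite ?in_setD1 ?wv ?wI // in_closed_nbhd euw orbT.
  have [t tI tx] := domI x; exists t => //; rewrite in_setD1 tI andbT.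
  by apply: contraTneq tx => ->; rewrite in_closed_nbhd eq_sym (negbTE xv) esym leaf_v.
- apply/forall_inP => X domX; move: ((wd minI).2 X domX).
  by rewrite (cardsD1 v I) vI; lia.
Qed.

Section Improvement.
Variables (S : {set V}) (s : V).
Hypotheses (candS : candidate S) (sS : s \in S).
Hypothesis no_private : forall p, ~~ external_private e (u |: S) s p.

Let uS : u \notin S. Proof. by case/and4P: candS. Qed.
Let vS : v \notin S. Proof. by case/and4P: candS. Qed.

Lemma s_nadj x : x \in u |: S -> ~~ e s x.
Proof.
exact: (minimal_dominating_isolated eirr (candidate_minimal candS) (setU1r u sS) no_private).
Qed.

Lemma s_nadj_u : ~~ e s u. Proof. by rewrite s_nadj ?setU11. Qed.

Lemma s_neq_v : s != v.
Proof. by apply: contraTneq sS => ->. Qed.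

Lemma s_nadj_v : ~~ e s v.
Proof. by rewrite esym leaf_v; apply: contraTneq sS => ->. Qed.

Definition private_nbrs : {set V} :=
  [set y | e s y & [forall t in S :\ s, t \notin closed_nbhd e y]].

Lemma private_nbrs_adj_u y : y \in private_nbrs -> e u y.
Proof.
rewrite inE => /andP[esy /forall_inP others]; apply: contraT => nuy.
have yS : y \notin S by apply: contraTN esy => yS; rewrite s_nadj // in_setU1 yS orbT.
have : external_private e (u |: S) s y.
  apply/and3P; split; first by rewrite esym.
    by rewrite in_setU1 negb_or yS andbT; apply: contraTneq esy => ->; rewrite (negbTE s_nadj_u).
  apply/forall_inP => t; rewrite in_setU1 => /orP[/eqP-> | tS]; first by rewrite esym (negbTE nuy).
  apply/implyP => eyt; apply: contraTT eyt => ts.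
  by move: (others t); rewrite in_setD1 ts tS in_closed_nbhd negb_or => /(_ isT)/andP[].
by rewrite (negbTE (no_private y)).
Qed.

Lemma dominated_by_others x :
  x != v -> x != s -> x \notin private_nbrs ->
  exists2 t, t \in S :\ s & t \in closed_nbhd e x.
Proof.
move=> xv xs xQ; case/and4P: candS => _ _ /dominatesP domS _.
have [|t tS tx] := domS x; first by rewrite in_setC1.
have [ts | ts] := eqVneq t s; last by exists t; rewrite // in_setD1 ts.
have esx : e s x by move: tx; rewrite ts in_closed_nbhd eq_sym (negbTE xs) esym.
by move: xQ; rewrite inE esx /= => /forall_inPn[t' t'S]; rewrite negbK; exists t'.
Qed.

Lemma private_nbrs_dominating :
  private_nbrs != set0 -> dominating e ((S :\ s) :|: private_nbrs :|: [set v]).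
Proof.
case/set0Pn=> y0 y0Q; apply/dominatingP => x.
have in_Z y : y \in private_nbrs -> y \in (S :\ s) :|: private_nbrs :|: [set v].
  by move=> yQ; rewrite !in_setU yQ orbT.
have [-> | xv] := eqVneq x v.
  by exists v; rewrite ?in_closed_nbhd ?eqxx // !in_setU set11 orbT.
have [-> | xs] := eqVneq x s.
  exists y0; first exact: in_Z.
  by move: y0Q; rewrite inE in_closed_nbhd => /andP[-> _]; rewrite orbT.
have [xQ | xQ] := boolP (x \in private_nbrs).
  by exists x; rewrite ?in_Z ?in_closed_nbhd ?eqxx.
by have [t tS tx] := dominated_by_others xv xs xQ; exists t; rewrite // !in_setU tS.
Qed.

Lemma private_nbrs_in_closed_nbhd t :
  t \in (S :\ s) :|: private_nbrs :|: [set v] -> t \in closed_nbhd e s -> t \in private_nbrs.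
Proof.
rewrite in_closed_nbhd !in_setU in_set1 in_setD1 => /orP[/orP[/andP[ts tS] | //] | /eqP->].
  by rewrite (negbTE ts) (negbTE (s_nadj _)) // in_setU1 tS orbT.
by rewrite eq_sym (negbTE s_neq_v) (negbTE s_nadj_v).
Qed.

Lemma improve_by_private_nbrs : private_nbrs != set0 ->
  exists2 S', candidate S' & #|S :&: [set x | e u x]| < #|S' :&: [set x | e u x]|.
Proof.
(* A minimal, hence minimum, dominating subset Z0 of (S :\ s) :|: private_nbrs
   :|: [set v] must contain v; dropping v trades s for vertices adjacent to u. *)
move=> Qn0; have [Z0 minZ0 sZ0] := minimal_dominating_sub (private_nbrs_dominating Qn0).
have [/dominatingP domZ0 _] := minZ0.
have inZ t : t \in Z0 -> t \in closed_nbhd e s -> t \in private_nbrs.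
  by move=> /(subsetP sZ0); apply: private_nbrs_in_closed_nbhd.
have uZ0 : u \notin Z0.
  apply: contraNN s_nadj_u => /(subsetP sZ0).
  rewrite !in_setU in_setD1 (negbTE uS) andbF in_set1 (negbTE support_neq_leaf) orbF /=.
  by rewrite inE => /andP[].
have vZ0 : v \in Z0.
  have [t tZ0] := domZ0 v; rewrite in_closed_nbhd leaf_v => /orP[/eqP<- // | /eqP tu].
  by move: uZ0; rewrite -tu tZ0.
case/and4P: (candS) => _ _ _ /forall_inP minS.
have card_Z0 : #|Z0 :\ v| = #|S|.
  have := minS Z0 (minZ0.1); have := (wd minZ0).2 _ (candidate_dominating candS).
  by rewrite (cardsD1 v Z0) vZ0 cardsU1 uS; lia.
exists (Z0 :\ v).
  apply/and4P; split; rewrite ?in_setD1 ?eqxx ?(negbTE uZ0) ?andbF //.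
    apply/dominatesP => x; rewrite in_setC1 => xv.
    have [t tZ0 tx] := domZ0 x; have [tv | tv] := eqVneq t v; last by exists t; rewrite // in_setD1 tv.
    have -> : x = u by apply/eqP; move: tx; rewrite tv in_closed_nbhd eq_sym (negbTE xv) esym leaf_v.
    have [y yZ0 ys] := domZ0 s; have yQ := inZ y yZ0 ys.
    exists y; last by rewrite in_closed_nbhd private_nbrs_adj_u ?orbT.
    rewrite in_setD1 yZ0 andbT; apply: contraTneq yQ => ->.
    by rewrite inE negb_and s_nadj_v.
  by apply/forall_inP => X domX; rewrite card_Z0 minS.
apply: card_setI_lt card_Z0 sS _ _; first by rewrite inE esym s_nadj_u.
apply/subsetP => t /setDP[/setD1P[tv tZ0] nut]; rewrite in_setD nut /=.
have := subsetP sZ0 t tZ0; rewrite !in_setU in_set1 (negbTE tv) orbF => /orP[// | tQ].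
by move: nut; rewrite inE private_nbrs_adj_u.
Qed.

Lemma improve_by_swap : private_nbrs = set0 ->
  exists2 S', candidate S' &
    (#|S :&: [set x | e u x]| <= #|S' :&: [set x | e u x]|) &&
    (#|isolated_part S'| < #|isolated_part S|).
Proof.
move=> Q0; have [y esy] := no_isolated s.
have yS : y \notin S by apply: contraTN esy => yS; rewrite s_nadj // in_setU1 yS orbT.
have [t tS ty] : exists2 t, t \in S :\ s & t \in closed_nbhd e y.
  have : y \notin private_nbrs by rewrite Q0 inE.
  by rewrite inE esy /= => /forall_inPn[t tS]; rewrite negbK; exists t.
have eyt : e y t.
  move: ty; rewrite in_closed_nbhd => /orP[/eqP ty | //].
  by move: tS; rewrite ty in_setD1 (negbTE yS) andbF.
case/and4P: (candS) => _ _ _ /forall_inP minS.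
have card_swap : #|y |: (S :\ s)| = #|S|.
  by rewrite cardsU1 in_setD1 (negbTE yS) andbF (cardsD1 s S) sS.
exists (y |: (S :\ s)).
  apply/and4P; split.
  - rewrite in_setU1 in_setD1 (negbTE uS) andbF orbF.
    by apply: contraTneq esy => <-; apply: s_nadj_u.
  - rewrite in_setU1 in_setD1 (negbTE vS) andbF orbF.
    by apply: contraTneq esy => <-; apply: s_nadj_v.
  - apply/dominatesP => x; rewrite in_setC1 => xv.
    have [-> | xs] := eqVneq x s.
      by exists y; rewrite ?setU11 // in_closed_nbhd esy orbT.
    have [|t' t'S t'x] := dominated_by_others xv xs; first by rewrite Q0 inE.
    by exists t'; rewrite // in_setU1 t'S orbT.
  - by apply/forall_inP => X domX; rewrite card_swap minS.
apply/andP; split.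
  apply/subset_leq_card/subsetP => x /setIP[xS ux].
  rewrite inE ux andbT in_setU1 in_setD1 xS andbT; apply/orP; right.
  by apply: contraTneq ux => ->; rewrite inE esym s_nadj_u.
apply/proper_card/properP; split.
  apply/subsetP => d /setIdP[dS' /forall_inP dlonely].
  have dy : d != y.
    by apply: contraTneq eyt => <-; apply: dlonely; rewrite !in_setU1 tS !orbT.
  have dS : d \in S by move: dS'; rewrite in_setU1 (negbTE dy) => /setD1P[].
  apply/setIdP; split=> //; apply/forall_inP => x xuS.
  have [-> | xs] := eqVneq x s; first by rewrite esym s_nadj // setU1r.
  by apply: dlonely; move: xuS; rewrite !in_setU1 in_setD1 xs /=; case/orP=> ->; rewrite ?orbT.
have sy : s != y by apply: contraNneq yS => <-.
exists s; first by apply/setIdP; split=> //; apply/forall_inP => x; apply: s_nadj.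
by rewrite inE in_setU1 (negbTE sy) in_setD1 eqxx.
Qed.

End Improvement.

Lemma candidate_improve S s :
  candidate S -> s \in S -> (forall p, ~~ external_private e (u |: S) s p) ->
  exists2 S', candidate S' & weight S < weight S'.
Proof.
move=> candS sS noprv; rewrite /weight.
have [Q0 | Qn0] := eqVneq (private_nbrs S s) set0.
  have [S' candS' /andP[leN ltI]] := improve_by_swap candS sS noprv Q0.
  have : #|isolated_part S| <= #|V| by apply: max_card.
  by exists S' => //; nia.
have [S' candS' ltN] := improve_by_private_nbrs candS sS noprv Qn0.
by exists S' => //; nia.
Qed.

Lemma candidate_with_private_nbrs :
  exists2 S, candidate S & forall s, s \in S -> exists p, external_private e (u |: S) s p.
Proof.
have [S0 cand0] := candidate_exists.
case: (arg_maxnP weight cand0) => S candS maxS.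
exists S => // s sS; apply/existsP; apply: contraT => /existsPn noprv.
have [S' candS' lt] := candidate_improve candS sS noprv.
by move: (maxS S' candS'); rewrite /= leqNgt lt.
Qed.

Lemma leaf_support_private_dominating :
  exists S : {set V},
    [/\ u \notin S, dominates e S [set~ v], dominating e (u |: S)
      & forall x, x \in u |: S -> exists p, external_private e (u |: S) x p].
Proof.
have [S candS prv] := candidate_with_private_nbrs.
case/and4P: (candS) => uS vS domS _.
exists S; split => //; first exact: candidate_dominating.
move=> x /setU1P[-> | /prv //]; exists v; apply/and3P; split; first exact: evu.
  by rewrite in_setU1 negb_or eq_sym support_neq_leaf vS.
by apply/forall_inP => t _; rewrite leaf_v implybb.
Qed.

End LeafSupport.

Section CartesianProduct.
Variables (V W : finType) (e : rel V) (f : rel W).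

Lemma in_cart_closed_nbhd p q :
  (q \in closed_nbhd (cart_prod e f) p) =
  [|| q == p, (p.1 == q.1) && f p.2 q.2 | (p.2 == q.2) && e p.1 q.1].
Proof. by rewrite in_closed_nbhd. Qed.

Lemma closed_nbhd_layer x t h :
  t \in closed_nbhd e x -> (t, h) \in closed_nbhd (cart_prod e f) (x, h).
Proof.
rewrite in_closed_nbhd in_cart_closed_nbhd /= xpair_eqE !eqxx andbT /=.
by case/orP=> ->; rewrite ?orbT.
Qed.

Lemma setX_minimal_dominating (D : {set V}) :
  dominating e D -> (forall x, x \in D -> exists p, external_private e D x p) ->
  minimal_dominating (cart_prod e f) (setX D [set: W]).
Proof.
move=> /dominatingP domD prv; split.
  apply/dominatingP => -[x h]; have [t tD tx] := domD x.
  by exists (t, h); rewrite ?closed_nbhd_layer // in_setX tD in_setT.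
move=> B /properP[sBD [[x h] xhD xhB]]; apply/negP => /dominatingP domB.
have /setXP[xD _] := xhD; have [p /and3P[_ pD /forall_inP pprv]] := prv x xD.
have [[y k] ykB] := domB (p, h); have /setXP[yD _] := subsetP sBD _ ykB.
rewrite in_cart_closed_nbhd /= xpair_eqE.
case/or3P=> [/andP[/eqP yp _] | /andP[/eqP py _] | /andP[/eqP hk epy]].
- by move: pD; rewrite -yp yD.
- by move: pD; rewrite py yD.
- by move: xhB; rewrite hk -(eqP (implyP (pprv y yD) epy)) ykB.
Qed.

Lemma leaf_layer_dominating (S : {set V}) v b b' :
  dominates e S [set~ v] -> f b b' -> b' != b ->
  dominating (cart_prod e f) (setX S [set: W] :|: setX [set v] [set~ b]).
Proof.
move=> /dominatesP domS fbb' b'b; apply/dominatingP => -[x h].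
have [xv | xv] := eqVneq x v; last first.
  have /domS[t tS tx] : x \in [set~ v] by rewrite in_setC1.
  by exists (t, h); rewrite ?closed_nbhd_layer // !inE tS.
have [hb | hb] := eqVneq h b.
  exists (v, b'); first by rewrite !inE eqxx b'b orbT.
  by rewrite in_cart_closed_nbhd /= xv hb !eqxx fbb' orbT.
by exists (x, h); rewrite ?in_closed_nbhd ?eqxx // !inE xv hb eqxx orbT.
Qed.

Lemma card_leaf_layer_lt (S : {set V}) u v b :
  u \notin S ->
  #|setX S [set: W] :|: setX [set v] [set~ b]| < #|setX (u |: S) [set: W]|.
Proof.
move=> uS; have W0 : 0 < #|W| by apply/card_gt0P; exists b.
apply: leq_ltn_trans (leq_card_setU _ _) _.
rewrite !cardsX cardsU1 uS cards1 cardsC1 cardsT; lia.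
Qed.

End CartesianProduct.

Theorem corollary20 (V : finType) (e : rel V) :
  simple_graph e -> connected_graph e -> well_dominated e -> 3 <= #|V| ->
  (exists (W : finType) (f : rel W),
      [/\ simple_graph f, connected_graph f, 2 <= #|W|
        & well_dominated (cart_prod e f)]) ->
  forall v : V, 2 <= degree e v.
Proof.
move=> [esym eirr] conn wd V3 [W [f [[fsym firr] fconn W2 wdGH]]] v.
rewrite leqNgt; apply/negP => deg_v.
have no_isolated := connected_no_isolated esym conn (ltnW V3).
have [u evu] := no_isolated v.
have leaf_v := degree_le1_nbr deg_v evu.
have [w euw wv] := support_other_nbr esym conn V3 leaf_v.
have [S [uS domS domD prv]] :=
  leaf_support_private_dominating esym eirr wd no_isolated leaf_v euw wv.
have /card_gt0P[b _] : 0 < #|W| by apply: ltnW.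
have [b' fbb'] := connected_no_isolated fsym fconn W2 b.
have b'b : b' != b by apply: contraTneq fbb' => ->; rewrite firr.
have := (wdGH _ (setX_minimal_dominating f domD prv)).2 _ (leaf_layer_dominating domS fbb' b'b).
by rewrite leqNgt card_leaf_layer_lt.
Qed.
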